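(* View a section $P\in\Gamma(D^*\otimes D^* )$ as the $\mathcal A$-valued 1-form $X\mapsto P(X_D,\cdot)\in D^*$ and let $\Box=\partial\partial^*+\partial^*\partial$. Then on symmetric bilinear forms on $D$: if $P$ is symmetric, trace-free and $\sum_{s=1}^3P(I_s\cdot,I_s\cdot)=-P$, then $\Box P=4(n+2)P$; if $P$ is symmetric, trace-free and $\sum_{s=1}^3P(I_s\cdot,I_s\cdot)=3P$, then $\Box P=4(n+4)P$; and $\Box g=8(n+2)g$.
   Context: Setup. $M$ has dimension $4n+3$ with qc structure $(D,Q,[g])$: $D\subset TM$ of rank $4n$, $Q$ locally spanned by almost complex structures $I_1,I_2,I_3$ on $D$ with $I_1I_2=-I_2I_1=I_3$, $g$ a fixed metric in the conformal class on $D$, locally $D=\ker\eta^1\cap\ker\eta^2\cap\ker\eta^3$ with $d\eta^a(u,v)=2g(I_au,v)$ on $D$, and Reeb fields $\xi_a$ with $\eta^b(\xi_a)=\delta^b_a$, $(\xi_a\lrcorner d\eta^b)|_D=-(\xi_b\lrcorner d\eta^a)|_D$; $V=\mathrm{span}(\xi_a)$, $TM=V\oplus D$; $\eta^1,\eta^2,\eta^3$ also denote the dual basis of $V^*$. $(r,s,t)$ is a cyclic permutation of $(1,2,3)$; $I_0=\mathrm{Id}_D$. $\mathfrak{sp}(D,g)$ = $g$-skew endomorphisms commuting with all $I_s$; $\mathrm{End}_0(D)=\{q_0\mathrm{Id}+\sum_sq_sI_s+A_0:A_0\in\mathfrak{sp}(D,g)\}$. Algebraic bracket. Let $\mathcal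 A=V\oplus D\oplus\mathrm{End}_0(D)\oplus D^*\oplus V^*$, graded in degrees $-2,-1,0,1,2$. The bracket $\{\cdot,\cdot\}$ on $\mathcal A$ is fiberwise, bilinear, skew-symmetric, additive in degrees, zero whenever the total degree lies outside $[-2,2]$, and given for $u,v\in D$, $\varphi,\psi\in D^*$, $\Phi=\sum_{s=0}^3q_sI_s+\Phi_0$ ($\Phi_0\in\mathfrak{sp}(D,g)$), $\Psi\in\mathrm{End}_0(D)$, $\xi=\sum a_s\xi_s\in V$, $\eta=\sum b_s\eta^s\in V^*$, by: $\{u,v\}=-2\sum_sg(I_su,v)\xi_s$; $\{\Phi,u\}=\Phi(u)$; $\{\Phi,\Psi\}=\Phi\Psi-\Psi\Phi$; $\{\Phi,\xi\}=2q_0\xi+2\sum_{(r,s,t)}(q_ra_s-q_sa_r)\xi_t$; $\{\Phi,\varphi\}=-\varphi\circ\Phi$; $\{\Phi_0,\eta\}=0$, $\{I_0,\eta\}=-2\eta$, $\{I_r,\eta^s\}=-\{I_s,\eta^r\}=2\eta^t$, $\{I_r,\eta^r\}=0$; $\{u,\varphi\}=\varphi(u)I_0-\sum_{s=1}^3\varphi(I_su)I_s+u\wedge_{I_0}\varphi-\sum_{s=1}^3u\wedge_{I_s}\varphi$ with $(u\wedge_{I_s}\varphi)(v)=\varphi(I_sv)I_su-g(u,I_sv)I_s\varphi^\sharp$; $\{\xi,\eta\}=2\sum_sa_sb_sI_0-2\sum_{(r,s,t)}(a_rb_s-a_sb_r)I_t$; $\{\xi,\varphi\}=\sum_sa_sI_s(\varphi^\sharp)$;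 $\{\varphi,\psi\}=-\sum_s\varphi(I_s\psi^\sharp)\eta^s$; $\{v,\eta\}=2\sum_sb_sg(I_sv,\cdot)$. (Sums over $(r,s,t)$ are over cyclic permutations; $\varphi^\sharp$ is the $g$-dual vector.) Differential and codifferential. Let $(\epsilon_i)=(\xi_1,\xi_2,\xi_3,e_1,\dots,e_{4n})$ with $(e_a)$ a $g$-orthonormal frame of $D$, and $(\epsilon^i)=(\eta^1,\eta^2,\eta^3,e^1,\dots,e^{4n})$ its dual frame (identifying $TM\cong V\oplus D$ and $T^*M\cong V^*\oplus D^*$). For a section $s$ of $\mathcal A$: $(\partial s)(X)=\{X,s\}$. For an $\mathcal A$-valued 1-form $\phi$: $\partial^*\phi=\sum_i\{\epsilon^i,\phi(\epsilon_i)\}$ and $(\partial\phi)(X,Y)=\{X,\phi(Y)\}-\{Y,\phi(X)\}-\phi(\{X,Y\}_-)$. For an $\mathcal A$-valued 2-form $K$: $(\partial^*K)(X)=\sum_i\{\epsilon^i,K(\epsilon_i,X)\}+\frac12\sum_iK(\{\epsilon^i,X\}_-,\epsilon_i)$. Here $(\cdot)_-$ denotes the $V\oplus D$ component, and $X,Y\in TM\cong V\oplus D$. *)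

(* Fiberwise (pointwise) model of the algebraic bracket on
   A = V + D + End_0(D) + D^* + V^* of a quaternionic contact structure. *)
From HB Require Import structures.
From mathcomp Require Import all_boot all_order all_algebra.
Set Implicit Arguments.
Unset Strict Implicit.
Unset Printing Implicit Defensive.
Import Order.TTheory GRing.Theory Num.Theory.
Local Open Scope ring_scope.

Section QCBracket.
Variable R : realFieldType.
Variable n : nat.
(* I i is I_(i+1), i.e. I 0 = I_1, I 1 = I_2, I 2 = I_3, acting on column
   vectors of D = R^(4n) written in a g-orthonormal frame (e_a). *)
Variable I : 'I_3 -> 'M[R]_(4 * n).

Local Notation N := (4 * n)%N.

Definition Vt := 'cV[R]_3.          (* V   : coordinates a_s w.r.t. xi_s   *)
Definition Dt := 'cV[R]_N.          (* D   : coordinates w.r.t. e_a        *)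
Definition Et := 'M[R]_N.           (* End_0(D) (matrices in frame e_a)    *)
Definition Dst := 'cV[R]_N.         (* D^* : coordinates w.r.t. e^a        *)
Definition Vst := 'cV[R]_3.         (* V^* : coordinates b_s w.r.t. eta^s  *)

Definition Alg := ((((Vt * Dt) * Et) * Dst) * Vst)%type.
Definition Tan := (Vt * Dt)%type.

Definition aV (x : Alg) : Vt := x.1.1.1.1.
Definition aD (x : Alg) : Dt := x.1.1.1.2.
Definition aE (x : Alg) : Et := x.1.1.2.
Definition aDs (x : Alg) : Dst := x.1.2.
Definition aVs (x : Alg) : Vst := x.2.
Definition mkA (a : Vt) (u : Dt) (F : Et) (p : Dst) (b : Vst) : Alg :=
  ((((a, u), F), p), b).

(* g(u,v) with g the standard inner product in the orthonormal frame;
   a covector phi acts by phi(u) = dot phi u, and phi^# = phi. *)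
Definition dot (k : nat) (u v : 'cV[R]_k) : R := (u^T *m v) 0 0.

(* (r,s,t) cyclic permutations of (1,2,3): for t, r = t+1, s = t+2 (mod 3) *)
Definition nx (t : 'I_3) : 'I_3 := t + 1.
Definition nx2 (t : 'I_3) : 'I_3 := t + 1 + 1.

(* sum_{(r,s,t) cyclic} (q_r a_s - q_s a_r) xi_t *)
Definition cross (q a : 'cV[R]_3) : 'cV[R]_3 :=
  \col_(t < 3) (q (nx t) 0 * a (nx2 t) 0 - q (nx2 t) 0 * a (nx t) 0).

(* The coefficients q_0,...,q_3 of Phi = q_0 Id + sum_s q_s I_s + Phi_0,
   Phi_0 in sp(D,g), extracted by the trace pairing (valid on End_0(D)). *)
Definition q0 (F : Et) : R := \tr F / N%:R.
Definition qv (F : Et) : 'cV[R]_3 := \col_(s < 3) (- \tr (I s *m F) / N%:R).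

Definition brDD (u v : Dt) : Vt := \col_(s < 3) (-2 * dot (I s *m u) v).
Definition brEV (F : Et) (a : Vt) : Vt := (2 * q0 F) *: a + 2%:R *: cross (qv F) a.
Definition brEVs (F : Et) (b : Vst) : Vst := (-2 * q0 F) *: b + 2%:R *: cross (qv F) b.
(* {Phi, phi} = - phi o Phi *)
Definition brEDs (F : Et) (p : Dst) : Dst := - (F^T *m p).
(* u wedge_{I_s} phi : v |-> phi(I_s v) I_s u - g(u, I_s v) I_s phi^# *)
Definition wedgeJ (J : Et) (u : Dt) (p : Dst) : Et :=
  J *m (u *m p^T) *m J - J *m (p *m u^T) *m J.
Definition brDDs (u : Dt) (p : Dst) : Et :=
  dot p u *: 1%:M - \sum_(s < 3) dot p (I s *m u) *: I s
  + wedgeJ 1%:M u p - \sum_(s < 3) wedgeJ (I s) u p.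
Definition brVVs (a : Vt) (b : Vst) : Et :=
  (2 * dot a b) *: 1%:M - 2%:R *: \sum_(t < 3) cross a b t 0 *: I t.
Definition brVDs (a : Vt) (p : Dst) : Dt := \sum_(s < 3) a s 0 *: (I s *m p).
Definition brDsDs (p r : Dst) : Vst := \col_(s < 3) (- dot p (I s *m r)).
Definition brDVs (v : Dt) (b : Vst) : Dst := 2%:R *: \sum_(s < 3) b s 0 *: (I s *m v).

(* ---- the full bracket: bilinear, skew, additive in degrees, zero outside
   total degree [-2,2] ---- *)
Definition br (x y : Alg) : Alg :=
  mkA
    (brDD (aD x) (aD y) + brEV (aE x) (aV y) - brEV (aE y) (aV x))
    (aE x *m aD y - aE y *m aD x + brVDs (aV x) (aDs y) - brVDs (aV y) (aDs x))
    (aE x *m aE y - aE y *m aE x + brDDs (aD x) (aDs y) - brDDs (aD y) (aDs x)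
      + brVVs (aV x) (aVs y) - brVVs (aV y) (aVs x))
    (brEDs (aE x) (aDs y) - brEDs (aE y) (aDs x)
      + brDVs (aD x) (aVs y) - brDVs (aD y) (aVs x))
    (brEVs (aE x) (aVs y) - brEVs (aE y) (aVs x) + brDsDs (aDs x) (aDs y)).

Definition ofTan (X : Tan) : Alg := mkA X.1 X.2 0 0 0.
Definition minus (x : Alg) : Tan := (aV x, aD x).

Definition epsV (s : 'I_3) : Tan := (delta_mx s 0, 0).
Definition epsD (a : 'I_N) : Tan := (0, delta_mx a 0).
Definition epsVs (s : 'I_3) : Alg := mkA 0 0 0 0 (delta_mx s 0).
Definition epsDs (a : 'I_N) : Alg := mkA 0 0 0 (delta_mx a 0) 0.

Definition form1 := Tan -> Alg.
Definition form2 := Tan -> Tan -> Alg.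

Definition d0 (s : Alg) : form1 := fun X => br (ofTan X) s.
Definition dstar1 (phi : form1) : Alg :=
  \sum_(s < 3) br (epsVs s) (phi (epsV s)) + \sum_(a < N) br (epsDs a) (phi (epsD a)).
Definition d1 (phi : form1) : form2 := fun X Y =>
  br (ofTan X) (phi Y) - br (ofTan Y) (phi X) - phi (minus (br (ofTan X) (ofTan Y))).
Definition dstar2 (K : form2) : form1 := fun X =>
  \sum_(s < 3) br (epsVs s) (K (epsV s) X) + \sum_(a < N) br (epsDs a) (K (epsD a) X)
  + 2%:R^-1 *: (\sum_(s < 3) K (minus (br (epsVs s) (ofTan X))) (epsV s)
                + \sum_(a < N) K (minus (br (epsDs a) (ofTan X))) (epsD a)).

Definition Box (phi : form1) : form1 := fun X => d0 (dstar1 phi) X + dstar2 (d1 phi) X.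

(* a bilinear form P on D (P(u,v) = u^T P v) viewed as the A-valued 1-form
   X |-> P(X_D, .) in D^* *)
Definition formP (P : 'M[R]_N) : form1 := fun X => mkA 0 0 0 (P^T *m X.2) 0.

End QCBracket.

Definition qc_fibre (R : realFieldType) (n : nat) (I : 'I_3 -> 'M[R]_(4 * n)) : Prop :=
  (forall s, (I s)^T = - I s) /\
  (forall s, I s *m I s = - 1%:M) /\
  I 0 *m I 1 = I 2 /\ I 1 *m I 0 = - I 2.

(* Since P is symmetric and the I_s are skew, tr (I_s P) = 0, hence d^* P = 0 and
   Box P = d^* d P.  In d P only the brackets {X_V, P(Y)} in D and {X_D, P(Y)} in
   End_0(D) survive.  Contracting with the frame, the End_0(D)-valued part of d^* d P
   is cancelled by the 1/2-correction term of d^*, while the D^*-valued part, computed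
   from the rank-one formula for {u, phi}, is
     Box P = (4n + 10) P + 2 sum_s P(I_s ., I_s .) + (tr P) g.
   The three eigenvalues follow by substituting sum_s P(I_s ., I_s .) = -P, = 3P,
   and P = g. *)

From HB Require Import structures.
From mathcomp Require Import all_boot all_order all_algebra ring.
Set Implicit Arguments.
Unset Strict Implicit.
Unset Printing Implicit Defensive.
Import Order.TTheory GRing.Theory Num.Theory.
Local Open Scope ring_scope.

Section Frame.
Variables (R : comPzRingType) (k : nat).
Local Notation e a := (delta_mx a 0 : 'cV[R]_k).

Lemma trmx11 (A : 'M[R]_1) : A^T = A.
Proof. by rewrite [A]mx11_scalar tr_scalar_mx. Qed.

Lemma mulmx11 m (v : 'M[R]_(m, 1)) (A : 'M[R]_1) : v *m A = \tr A *: v.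
Proof. by rewrite {1}[A]mx11_scalar mul_mx_scalar trace_mx11. Qed.

Lemma trmx_delta_mul_delta a : (e a)^T *m e a = 1%:M.
Proof. by rewrite trmx_delta mul_delta_mx; apply/matrixP => i j; rewrite !ord1 !mxE. Qed.

Lemma sum_delta_mul_trmx : \sum_(a < k) e a *m (e a)^T = 1%:M.
Proof. by under eq_bigr do rewrite trmx_delta mul_delta_mx; rewrite mx1_sum_delta. Qed.

Lemma sum_delta_mul_col p (z : 'M[R]_(k, p)) : \sum_(a < k) e a *m ((e a)^T *m z) = z.
Proof. by under eq_bigr do rewrite mulmxA; rewrite -mulmx_suml sum_delta_mul_trmx mul1mx. Qed.

Lemma sum_delta_mul_row (x : 'rV[R]_k) : \sum_(a < k) e a *m (x *m e a) = x^T.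
Proof. by under eq_bigr do rewrite -[x *m _]trmx11 trmx_mul; rewrite sum_delta_mul_col. Qed.

Lemma sum_delta_mx_trace (M : 'M[R]_k) : \sum_(a < k) (e a)^T *m M *m e a = (\tr M)%:M.
Proof.
apply/matrixP => i j; rewrite !ord1 summxE !mxE eqxx mulr1n; apply: eq_bigr => a _.
by rewrite trmx_delta -rowE -colE !mxE.
Qed.

End Frame.

Section Bracket.
Variables (R : realFieldType) (n : nat) (I : 'I_3 -> 'M[R]_(4 * n)).
Local Notation N := (4 * n)%N.
Local Notation e a := (delta_mx a 0 : 'cV[R]_N).
Local Notation e3 s := (delta_mx s 0 : 'cV[R]_3).

Lemma mkA_add a u F p b a' u' F' p' b' :
  mkA a u F p b + mkA a' u' F' p' b' = mkA (a + a') (u + u') (F + F') (p + p') (b + b') :> Alg R n.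
Proof. by []. Qed.

Lemma mkA_opp a u F p b : - mkA a u F p b = mkA (- a) (- u) (- F) (- p) (- b) :> Alg R n.
Proof. by []. Qed.

Lemma mkA_scale c a u F p b :
  c *: mkA a u F p b = mkA (c *: a) (c *: u) (c *: F) (c *: p) (c *: b) :> Alg R n.
Proof. by []. Qed.

Lemma mkA_sum m (a : 'I_m -> Vt R) (u : 'I_m -> Dt R n) (F : 'I_m -> Et R n)
    (p : 'I_m -> Dst R n) (b : 'I_m -> Vst R) :
  \sum_(i < m) mkA (a i) (u i) (F i) (p i) (b i)
  = mkA (\sum_i a i) (\sum_i u i) (\sum_i F i) (\sum_i p i) (\sum_i b i).
Proof.
elim: m a u F p b => [|m IHm] a u F p b; first by rewrite !big_ord0.
by rewrite !big_ord_recr /= IHm mkA_add.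
Qed.

Lemma dot0l k (u : 'cV[R]_k) : dot 0 u = 0. Proof. by rewrite /dot trmx0 mul0mx mxE. Qed.
Lemma dot0r k (u : 'cV[R]_k) : dot u 0 = 0. Proof. by rewrite /dot mulmx0 mxE. Qed.

Lemma cross0l (a : 'cV[R]_3) : cross 0 a = 0.
Proof. by apply/matrixP => i j; rewrite !mxE !mul0r subr0. Qed.
Lemma cross0r (a : 'cV[R]_3) : cross a 0 = 0.
Proof. by apply/matrixP => i j; rewrite !mxE !mulr0 subr0. Qed.
Lemma q00 : q0 (0 : 'M[R]_N) = 0. Proof. by rewrite /q0 mxtrace0 mul0r. Qed.
Lemma qv0 : qv I 0 = 0.
Proof. by apply/matrixP => i j; rewrite !mxE mulmx0 mxtrace0 oppr0 mul0r. Qed.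
Lemma brDD0l u : brDD I 0 u = 0.
Proof. by apply/matrixP => i j; rewrite !mxE mulmx0 dot0l mulr0. Qed.
Lemma brDD0r u : brDD I u 0 = 0.
Proof. by apply/matrixP => i j; rewrite !mxE dot0r mulr0. Qed.
Lemma brEV0l a : brEV I 0 a = 0.
Proof. by rewrite /brEV q00 qv0 cross0l mulr0 !scale0r scaler0 addr0. Qed.
Lemma brEV0r F : brEV I F 0 = 0.
Proof. by rewrite /brEV cross0r !scaler0 addr0. Qed.
Lemma brEVs0l a : brEVs I 0 a = 0.
Proof. by rewrite /brEVs q00 qv0 cross0l mulr0 !scale0r scaler0 addr0. Qed.
Lemma brEVs0r F : brEVs I F 0 = 0.
Proof. by rewrite /brEVs cross0r !scaler0 addr0. Qed.
Lemma brEDs0l (p : 'cV[R]_N) : brEDs 0 p = 0.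
Proof. by rewrite /brEDs trmx0 mul0mx oppr0. Qed.
Lemma brEDs0r (F : 'M[R]_N) : brEDs F 0 = 0.
Proof. by rewrite /brEDs mulmx0 oppr0. Qed.
Lemma wedgeJ0l (J : 'M[R]_N) p : wedgeJ J 0 p = 0.
Proof. by rewrite /wedgeJ trmx0 mul0mx mulmx0 !mulmx0 !mul0mx subr0. Qed.
Lemma wedgeJ0r (J : 'M[R]_N) p : wedgeJ J p 0 = 0.
Proof. by rewrite /wedgeJ trmx0 mul0mx mulmx0 !mulmx0 !mul0mx subr0. Qed.
Lemma brDDs0l p : brDDs I 0 p = 0.
Proof.
rewrite /brDDs dot0r scale0r sub0r wedgeJ0l !big1 ?oppr0 ?addr0 // => s _.
  by rewrite wedgeJ0l.
by rewrite mulmx0 dot0r scale0r.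
Qed.
Lemma brDDs0r p : brDDs I p 0 = 0.
Proof.
rewrite /brDDs dot0l scale0r sub0r wedgeJ0r !big1 ?oppr0 ?addr0 // => s _.
  by rewrite wedgeJ0r.
by rewrite dot0l scale0r.
Qed.
Lemma brVVs0l b : brVVs I 0 b = 0.
Proof.
rewrite /brVVs dot0l mulr0 scale0r sub0r big1 ?scaler0 ?oppr0 // => t _.
by rewrite cross0l mxE scale0r.
Qed.
Lemma brVVs0r b : brVVs I b 0 = 0.
Proof.
rewrite /brVVs dot0r mulr0 scale0r sub0r big1 ?scaler0 ?oppr0 // => t _.
by rewrite cross0r mxE scale0r.
Qed.
Lemma brVDs0l p : brVDs I 0 p = 0.
Proof. by rewrite /brVDs big1 // => s _; rewrite mxE scale0r. Qed.
Lemma brVDs0r p : brVDs I p 0 = 0.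
Proof. by rewrite /brVDs big1 // => s _; rewrite mulmx0 scaler0. Qed.
Lemma brDsDs0l p : brDsDs I 0 p = 0.
Proof. by apply/matrixP => i j; rewrite !mxE dot0l oppr0. Qed.
Lemma brDsDs0r p : brDsDs I p 0 = 0.
Proof. by apply/matrixP => i j; rewrite !mxE mulmx0 dot0r oppr0. Qed.
Lemma brDVs0l p : brDVs I 0 p = 0.
Proof. by rewrite /brDVs big1 ?scaler0 // => s _; rewrite mulmx0 scaler0. Qed.
Lemma brDVs0r p : brDVs I p 0 = 0.
Proof. by rewrite /brDVs big1 ?scaler0 // => s _; rewrite mxE scale0r. Qed.

Ltac br_simpl := rewrite /br /ofTan /minus /epsDs /epsVs /mkA /aV /aD /aE /aDs /aVs /=;
  rewrite ?brDD0l ?brDD0r ?brEV0l ?brEV0r ?brEVs0l ?brEVs0r ?brEDs0l ?brEDs0r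
    ?brDDs0l ?brDDs0r ?brVVs0l ?brVVs0r ?brVDs0l ?brVDs0r ?brDsDs0l ?brDsDs0r
    ?brDVs0l ?brDVs0r ?mulmx0 ?mul0mx ?subrr ?subr0 ?sub0r ?addr0 ?add0r ?oppr0.

Lemma br0r (x : Alg R n) : br I x 0 = 0.
Proof. by br_simpl. Qed.

Lemma br_ofTan_Ds (X : Tan R n) p :
  br I (ofTan X) (mkA 0 0 0 p 0) = mkA 0 (brVDs I X.1 p) (brDDs I X.2 p) 0 0.
Proof. by br_simpl. Qed.

Lemma br_epsDs_Ds a p : br I (epsDs R a) (mkA 0 0 0 p 0) = mkA 0 0 0 0 (brDsDs I (e a) p).
Proof. by br_simpl. Qed.

Lemma br_epsVs_D s v : br I (epsVs R n s) (mkA 0 v 0 0 0) = mkA 0 0 0 (- brDVs I v (e3 s)) 0.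
Proof. by br_simpl. Qed.

Lemma br_epsDs_DE a v F :
  br I (epsDs R a) (mkA 0 v F 0 0) = mkA 0 0 (- brDDs I v (e a)) (- brEDs F (e a)) 0.
Proof. by br_simpl. Qed.

Lemma minus_br_ofTan (X Y : Tan R n) : minus (br I (ofTan X) (ofTan Y)) = (brDD I X.2 Y.2, 0).
Proof. by br_simpl. Qed.

Lemma minus_br_epsVs s (X : Tan R n) : minus (br I (epsVs R n s) (ofTan X)) = (0, 0).
Proof. by br_simpl. Qed.

Lemma minus_br_epsDs a (X : Tan R n) : minus (br I (epsDs R a) (ofTan X)) = (0, - brVDs I X.1 (e a)).
Proof. by br_simpl. Qed.

End Bracket.

Section Quaternionic.
Variables (R : realFieldType) (n : nat) (I : 'I_3 -> 'M[R]_(4 * n)).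
Hypothesis Iskew : forall s, (I s)^T = - I s.
Hypothesis Isq : forall s, I s *m I s = - 1%:M.
Local Notation N := (4 * n)%N.
Local Notation e a := (delta_mx a 0 : 'cV[R]_N).
Local Notation e3 s := (delta_mx s 0 : 'cV[R]_3).

Lemma mxtrace_I s : \tr (I s) = 0.
Proof. by apply/eqP; rewrite -eqNr -raddfN /= -Iskew mxtrace_tr. Qed.

Lemma mxtrace_sym_mulI (P : 'M[R]_N) s : P^T = P -> \tr (P *m I s) = 0.
Proof.
move=> hP; apply/eqP; rewrite -eqNr -{1}mxtrace_tr trmx_mul Iskew hP mulNmx raddfN /=.
by rewrite opprK mxtrace_mulC.
Qed.

Lemma mulI_trmx_mulI s (w : 'cV[R]_N) : I s *m (w^T *m I s)^T = w.
Proof. by rewrite trmx_mul trmxK Iskew mulNmx mulmxN mulmxA Isq mulNmx mul1mx opprK. Qed.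

Definition Icomb (x : 'cV[R]_3) : 'M[R]_N := \sum_(s < 3) x s 0 *: I s.

Lemma trmx_Icomb x : (Icomb x)^T = - Icomb x.
Proof.
by rewrite linear_sum -sumrN; apply: eq_bigr => s _; rewrite linearZ /= Iskew scalerN.
Qed.

Lemma brVDsE x p : brVDs I x p = Icomb x *m p.
Proof. by rewrite /brVDs mulmx_suml; apply: eq_bigr => s _; rewrite scalemxAl. Qed.

Lemma brVDs_delta s p : brVDs I (e3 s) p = I s *m p.
Proof.
rewrite /brVDs (bigD1 s) //= mxE eqxx scale1r big1 ?addr0 // => t /negbTE ts.
by rewrite mxE ts scale0r.
Qed.

Lemma brDVs_delta s v : brDVs I v (e3 s) = 2%:R *: (I s *m v).
Proof.
rewrite /brDVs (bigD1 s) //= mxE eqxx scale1r big1 ?addr0 // => t /negbTE ts.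
by rewrite mxE ts scale0r.
Qed.

(* {u, phi} as a linear function of u phi^T, so that frame sums of brackets collapse. *)
Definition brDDs_mx (M : 'M[R]_N) : 'M[R]_N :=
  \tr M *: 1%:M - \sum_(s < 3) \tr (I s *m M) *: I s
  + (M - M^T) - \sum_(s < 3) I s *m (M - M^T) *m I s.

Lemma brDDs_mx_is_nmod_morphism : nmod_morphism brDDs_mx.
Proof.
split=> [|M M'].
  rewrite /brDDs_mx trmx0 subr0 mxtrace0 scale0r !big1 ?subr0 ?addr0 // => s _.
    by rewrite mulmx0 mul0mx.
  by rewrite mulmx0 mxtrace0 scale0r.
have skewD : M + M' - (M + M')^T = (M - M^T) + (M' - M'^T).
  by rewrite linearD opprD addrACA.
have conjD K K' : \sum_(s < 3) I s *m (K + K') *m I s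
    = \sum_(s < 3) I s *m K *m I s + \sum_(s < 3) I s *m K' *m I s.
  by rewrite -big_split; apply: eq_bigr => s _; rewrite mulmxDr mulmxDl.
rewrite /brDDs_mx skewD conjD mxtraceD scalerDl.
under eq_bigr do rewrite mulmxDr mxtraceD scalerDl.
by rewrite big_split /= !opprD (addrACA (\tr M *: 1%:M)) (addrACA (\tr M *: 1%:M - _))
  (addrACA (\tr M *: 1%:M - _ + _)).
Qed.

HB.instance Definition _ := GRing.isNmodMorphism.Build _ _ brDDs_mx brDDs_mx_is_nmod_morphism.

Lemma brDDsE u p : brDDs I u p = brDDs_mx (u *m p^T).
Proof.
have trE q : dot p q = \tr (q *m p^T) by rewrite /dot mxtrace_mulC trace_mx11.
rewrite /brDDs /brDDs_mx /wedgeJ trE trmx_mul trmxK !mul1mx !mulmx1.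
congr (_ - _ + _ - _); apply: eq_bigr => s _; first by rewrite trE mulmxA.
by rewrite mulmxBr mulmxBl.
Qed.

Lemma trmx_brDDs_mx M : (brDDs_mx M)^T = \tr M *: 1%:M + \sum_(s < 3) \tr (I s *m M) *: I s
  - (M - M^T) + \sum_(s < 3) I s *m (M - M^T) *m I s.
Proof.
rewrite /brDDs_mx !linearB !linearD /=; congr (_ + _ + _ + _).
- by rewrite linearZ /= trmx1.
- rewrite linearN /= linear_sum -sumrN; apply: eq_bigr => s _.
  by rewrite linearZ /= Iskew scalerN opprK.
- by rewrite linearN /= trmxK opprK addrC.
rewrite linear_sum -sumrN; apply: eq_bigr => s _ /=.
by rewrite !trmx_mul Iskew linearB /= trmxK !mulNmx !mulmxN opprK -mulmxN -mulNmx opprB mulmxA.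
Qed.

Lemma trmx_brDDs_mx_rank1 (x y v : 'cV[R]_N) : (brDDs_mx (x *m y^T))^T *m v =
  v *m (y^T *m x) + \sum_(s < 3) I s *m v *m (y^T *m I s *m x)
  - (x *m (y^T *m v) - y *m (x^T *m v))
  + \sum_(s < 3) I s *m (x *m (y^T *m I s *m v) - y *m (x^T *m I s *m v)).
Proof.
rewrite trmx_brDDs_mx trmx_mul trmxK !mulmxDl mulNmx !mulmx_suml.
congr (_ + _ - _ + _).
- by rewrite -scalemxAl mul1mx mxtrace_mulC -mulmx11.
- apply: eq_bigr => s _.
  by rewrite -scalemxAl mulmxA mxtrace_mulC -mulmx11 (mulmxA y^T).
- by rewrite mulmxBl !mulmxA.
apply: eq_bigr => s _.
by rewrite mulmxBr mulmxBl mulmxBr mulmxBl !mulmxA.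
Qed.

Lemma sum_brDDs_delta (A B : 'M[R]_N) :
  \sum_(a < N) brDDs I (A *m e a) (B *m e a) = brDDs_mx (A *m B^T).
Proof.
under eq_bigr do rewrite brDDsE trmx_mul mulmxA -(mulmxA A).
by rewrite -raddf_sum -mulmx_suml -mulmx_sumr sum_delta_mul_trmx mulmx1.
Qed.

Lemma contract_brDDs_mx_l (w : 'cV[R]_N) :
  \sum_(a < N) (brDDs_mx (e a *m w^T))^T *m e a = (N + 6)%:R *: w.
Proof.
under eq_bigr do rewrite trmx_brDDs_mx_rank1.
rewrite !big_split /= sumrN sumrB exchange_big [X in _ + _ - _ + X]exchange_big /=.
have Iw s : \sum_(a < N) I s *m e a *m (w^T *m I s *m e a) = w.
  by under eq_bigr do rewrite -mulmxA; rewrite -mulmx_sumr sum_delta_mul_row mulI_trmx_mulI.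
have Iw0 s : \sum_(a < N) w *m ((e a)^T *m I s *m e a) = 0.
  by rewrite -mulmx_sumr sum_delta_mx_trace mxtrace_I mulmx11 trace_mx11 mxE scale0r.
under [X in _ + X - _ + _]eq_bigr do rewrite Iw.
under [X in _ + _ - _ + X]eq_bigr do
  rewrite -mulmx_sumr sumrB sum_delta_mul_row Iw0 subr0 mulI_trmx_mulI.
under [X in _ - (_ - X) + _]eq_bigr do rewrite trmx_delta_mul_delta mulmx1.
rewrite sum_delta_mul_row trmxK !sumr_const !card_ord -!scaler_nat.
by apply/colP => i; rewrite !mxE; ring.
Qed.

Lemma contract_brDDs_mx_r (P : 'M[R]_N) (u : 'cV[R]_N) : P^T = P ->
  \sum_(a < N) (brDDs_mx (u *m (P *m e a)^T))^T *m e a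
  = 2%:R *: (P *m u) - 2%:R *: ((\sum_(s < 3) (I s)^T *m P *m I s) *m u) - \tr P *: u.
Proof.
move=> hP; have PeT a : (P *m e a)^T = (e a)^T *m P by rewrite trmx_mul hP.
under eq_bigr do rewrite trmx_brDDs_mx_rank1 PeT.
rewrite !big_split /= sumrN sumrB exchange_big [X in _ + _ - _ + X]exchange_big /=.
have conjP s : I s *m P *m I s = - ((I s)^T *m P *m I s) by rewrite Iskew !mulNmx opprK.
have T1 : \sum_(a < N) e a *m ((e a)^T *m P *m u) = P *m u.
  by under eq_bigr do rewrite -mulmxA; rewrite sum_delta_mul_col.
have T2 s : \sum_(a < N) I s *m e a *m ((e a)^T *m P *m I s *m u) = - ((I s)^T *m P *m I s *m u).
  under eq_bigr do rewrite -!mulmxA.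
  by rewrite -mulmx_sumr sum_delta_mul_col !mulmxA conjP mulNmx.
have T3 : \sum_(a < N) u *m ((e a)^T *m P *m e a) = \tr P *: u.
  by rewrite -mulmx_sumr sum_delta_mx_trace mul_mx_scalar.
have T3' : \sum_(a < N) P *m e a *m (u^T *m e a) = P *m u.
  by under eq_bigr do rewrite -mulmxA; rewrite -mulmx_sumr sum_delta_mul_row trmxK.
have T4 s : \sum_(a < N) I s *m (u *m ((e a)^T *m P *m I s *m e a)
    - P *m e a *m (u^T *m I s *m e a)) = - ((I s)^T *m P *m I s *m u).
  rewrite -mulmx_sumr sumrB.
  under eq_bigr do rewrite -(mulmxA _ P).
  rewrite -mulmx_sumr sum_delta_mx_trace mxtrace_sym_mulI //.
  under eq_bigr do rewrite -mulmxA.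
  rewrite -mulmx_sumr sum_delta_mul_row trmx_mul trmxK Iskew.
  by rewrite mul_mx_scalar scale0r sub0r !mulNmx !mulmxN !opprK !mulmxA.
under [X in _ + X - _ + _]eq_bigr do rewrite T2.
under [X in _ + _ - _ + X]eq_bigr do rewrite T4.
rewrite T1 T3 T3' sumrN -mulmx_suml.
by apply/colP => i; rewrite !mxE; ring.
Qed.

Lemma dot_delta (M : 'M[R]_N) a : dot (e a) (M *m e a) = M a a.
Proof. by rewrite /dot mulmxA trmx_delta -rowE -colE !mxE. Qed.

Lemma d1_formP (P : 'M[R]_N) (Y Z : Tan R n) : d1 I (formP P) Y Z =
  mkA 0 (brVDs I Y.1 (P^T *m Z.2) - brVDs I Z.1 (P^T *m Y.2))
    (brDDs I Y.2 (P^T *m Z.2) - brDDs I Z.2 (P^T *m Y.2)) 0 0.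
Proof.
rewrite /d1 /formP !br_ofTan_Ds minus_br_ofTan /= mulmx0 !mkA_opp !mkA_add.
by rewrite !oppr0 !addr0.
Qed.

Lemma dstar1_formP (P : 'M[R]_N) : P^T = P -> dstar1 I (formP P) = 0.
Proof.
move=> hP; rewrite /dstar1 /formP /= big1 => [|s _]; last by rewrite mulmx0 br0r.
under eq_bigr do rewrite br_epsDs_Ds.
rewrite mkA_sum !big1_eq add0r; congr mkA.
apply/colP => s; rewrite summxE mxE.
under eq_bigr do rewrite mxE mulmxA dot_delta.
rewrite sumrN -[\sum_a _]/(\tr (I s *m P^T)) hP mxtrace_mulC mxtrace_sym_mulI //.
by rewrite oppr0.
Qed.

Section BoxFormP.
Variables (P : 'M[R]_N) (X : Tan R n).
Hypothesis hP : P^T = P.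
Local Notation u := X.2.
Local Notation J := (Icomb X.1).

Lemma sum_epsVs_d1 : \sum_(s < 3) br I (epsVs R n s) (d1 I (formP P) (epsV R n s) X)
  = mkA 0 0 0 (6%:R *: (P *m u)) 0.
Proof.
under eq_bigr do rewrite d1_formP /= brVDs_delta mulmx0 brVDs0r brDDs0l brDDs0r subr0 subrr
  br_epsVs_D brDVs_delta mulmxA Isq hP mulNmx mul1mx scalerN opprK.
by rewrite mkA_sum !big1_eq sumr_const card_ord -scaler_nat scalerA -natrM.
Qed.

Lemma sum_epsDs_d1 : \sum_(a < N) br I (epsDs R a) (d1 I (formP P) (epsD R a) X)
  = mkA 0 0 (brDDs_mx (J *m P))
      ((N + 6)%:R *: (P *m u) - (2%:R *: (P *m u)
        - 2%:R *: ((\sum_(s < 3) (I s)^T *m P *m I s) *m u) - \tr P *: u)) 0.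
Proof.
under eq_bigr do rewrite d1_formP /= brVDs0l sub0r br_epsDs_DE.
rewrite mkA_sum !big1_eq; congr mkA.
  rewrite -[J *m P]mulmx1 -trmx1 -sum_brDDs_delta; apply: eq_bigr => a _.
  by rewrite brVDsE hP mul1mx !brDDsE mulNmx raddfN opprK mulmxA.
under eq_bigr do rewrite /brEDs opprK !brDDsE hP linearB /= mulmxBl.
by rewrite sumrB contract_brDDs_mx_l contract_brDDs_mx_r.
Qed.

Lemma sum_epsVs_d1_minus :
  \sum_(s < 3) d1 I (formP P) (minus (br I (epsVs R n s) (ofTan X))) (epsV R n s) = 0.
Proof.
by rewrite big1 // => s _; rewrite minus_br_epsVs d1_formP /= !mulmx0 brVDs0l brVDs0r !subrr.
Qed.

Lemma sum_epsDs_d1_minus :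
  \sum_(a < N) d1 I (formP P) (minus (br I (epsDs R a) (ofTan X))) (epsD R a)
  = mkA 0 0 (- brDDs_mx (J *m P) *+ 2) 0 0.
Proof.
under eq_bigr do rewrite minus_br_epsDs d1_formP /= !brVDs0l subr0.
rewrite mkA_sum !big1_eq sumrB; congr mkA.
have -> : \sum_(a < N) brDDs I (- brVDs I X.1 (e a)) (P^T *m e a) = - brDDs_mx (J *m P).
  rewrite (eq_bigr (fun a => brDDs I (- J *m e a) (P^T *m e a))) => [|a _].
    by rewrite sum_brDDs_delta trmxK mulNmx raddfN.
  by rewrite brVDsE mulNmx.
have -> : \sum_(a < N) brDDs I (e a) (P^T *m - brVDs I X.1 (e a)) = brDDs_mx (J *m P).
  rewrite (eq_bigr (fun a => brDDs I (1%:M *m e a) (- (P^T *m J) *m e a))) => [|a _].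
    by rewrite sum_brDDs_delta mul1mx linearN /= trmx_mul trmxK trmx_Icomb mulNmx opprK.
  by rewrite mul1mx brVDsE mulmxN mulNmx mulmxA.
by rewrite mulr2n.
Qed.

Lemma Box_formP : Box I (formP P) X
  = formP ((N + 10)%:R *: P + 2%:R *: \sum_(s < 3) (I s)^T *m P *m I s + \tr P *: 1%:M) X.
Proof.
set M := _ + _ + _.
have symM : M^T = M.
  rewrite /M !linearD !linearZ /= hP trmx1 linear_sum; congr (_ + _ *: _ + _).
  by apply: eq_bigr => s _; rewrite /= !trmx_mul trmxK hP mulmxA.
rewrite /Box dstar1_formP // /d0 br0r /dstar2 sum_epsVs_d1 sum_epsDs_d1 sum_epsVs_d1_minus.
rewrite sum_epsDs_d1_minus !add0r mkA_scale !mkA_add /formP symM /mkA /=.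
congr (_, _, _, _, _); rewrite ?scaler0 ?addr0 ?add0r //.
  (* the End_0(D)-parts of the two frame sums in d^* cancel *)
  by rewrite -scaler_nat scalerA mulVf ?pnatr_eq0 // scale1r subrr.
rewrite /M !mulmxDl -!scalemxAl mul1mx.
by apply/colP => i; rewrite !mxE; ring.
Qed.

End BoxFormP.

End Quaternionic.

Theorem lemma4p2 (R : realFieldType) (n : nat) (I : 'I_3 -> 'M[R]_(4 * n)) :
  (0 < n)%N -> qc_fibre I ->
  (forall P : 'M[R]_(4 * n), P^T = P -> \tr P = 0 ->
     \sum_(s < 3) (I s)^T *m P *m I s = - P ->
     forall X, Box I (formP P) X = formP ((4 * (n + 2))%:R *: P) X) /\
  (forall P : 'M[R]_(4 * n), P^T = P -> \tr P = 0 ->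
     \sum_(s < 3) (I s)^T *m P *m I s = 3%:R *: P ->
     forall X, Box I (formP P) X = formP ((4 * (n + 4))%:R *: P) X) /\
  (forall X, Box I (formP (1%:M : 'M[R]_(4 * n))) X
             = formP ((8 * (n + 2))%:R *: (1%:M : 'M[R]_(4 * n))) X).
Proof.
move=> _ [Iskew [Isq _]]; have BoxE := Box_formP Iskew Isq.
split; [|split].
- move=> P hP trP hS X; rewrite BoxE // hS trP scale0r addr0 scalerN -scalerBl.
  by congr (formP (_ *: _) _); ring.
- move=> P hP trP hS X; rewrite BoxE // hS trP scale0r addr0 scalerA -scalerDl.
  by congr (formP (_ *: _) _); ring.
move=> X; have hS : \sum_(s < 3) (I s)^T *m 1%:M *m I s = 3%:R *: 1%:M.
  under eq_bigr do rewrite mulmx1 Iskew mulNmx Isq opprK.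
  by rewrite sumr_const card_ord scaler_nat.
rewrite BoxE ?trmx1 // hS mxtrace1 scalerA -!scalerDl.
by congr (formP (_ *: _) _); ring.
Qed.
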